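(* Let $X^+$ be a one-sided subshift whose natural extension $\tilde X$ is infinite and minimal. Then the eventually Markov part $\tilde X_M$ of $\tilde X$ is empty.
   Context: Let $\mathcal A$ be a finite alphabet and $\sigma$ the shift, $(\sigma x)_i=x_{i+1}$. A one-sided subshift is a nonempty closed $\sigma$-invariant $X^+\subseteq\mathcal A^{\mathbb N}$; its natural extension is $\tilde X=\{x\in\mathcal A^{\mathbb Z}: x_px_{p+1}\dots\in X^+ \text{ for all } p\in\mathbb Z\}$ with the shift. For a block $a_{-n}\dots a_0$ occurring in $\tilde X$, $\mathrm{fol}(a_{-n}\dots a_0)=\{b_0b_1\dots\in X^+:\exists b\in\tilde X \text{ with } b_{-n}\dots b_0=a_{-n}\dots a_0\}$. A point $a\in\tilde X$ is eventually Markov at time $p\in\mathbb Z$ if there is $N$ such that $\mathrm{fol}(a_{p-n}\dots a_p)=\mathrm{fol}(a_{p-N}\dots a_p)$ for all $n\ge N$. The eventually Markov part $\tilde X_M$ is the set of $a\in\tilde X$ that are eventually Markov at every time $p\in\mathbb Z$. A system is minimal if every orbit is dense. *)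

From mathcomp Require Import ssreflect ssrbool fintype.
From Stdlib Require Import ZArith List.
Open Scope Z_scope.

Section Subshift.
Set Implicit Arguments.
Variable A : finType.

Definition seqN := nat -> A.
Definition seqZ := Z -> A.

Definition shiftN (x : seqN) : seqN := fun i => x (S i).

(* closedness in the product (Cantor) topology of A^N, A finite discrete:
   a sequence all of whose finite prefixes are prefixes of points of X is in X *)
Definition closedN (X : seqN -> Prop) : Prop :=
  forall y : seqN,
    (forall n : nat, exists z, X z /\ forall i : nat, (i < n)%nat -> z i = y i) ->
    X y.

Definition one_sided_subshift (X : seqN -> Prop) : Prop :=
  (exists x, X x) /\ closedN X /\ (forall x, X x -> X (shiftN x)).

Definition tail_from (x : seqZ) (p : Z) : seqN := fun i => x (p + Z.of_nat i).

Definition nat_ext (X : seqN -> Prop) (x : seqZ) : Prop :=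
  forall p : Z, X (tail_from x p).

Definition shiftZ_iter (k : Z) (x : seqZ) : seqZ := fun i => x (i + k).

(* the system (nat_ext X, sigma) is minimal: every (two-sided) orbit is dense,
   density in the product topology of A^Z *)
Definition minimal_ext (X : seqN -> Prop) : Prop :=
  forall x y, nat_ext X x -> nat_ext X y ->
    forall m : nat, exists k : Z,
      forall i : Z, - Z.of_nat m <= i <= Z.of_nat m -> shiftZ_iter k x i = y i.

Definition infinite_ext (X : seqN -> Prop) : Prop :=
  ~ exists l : list seqZ, forall x, nat_ext X x -> In x l.

(* fol(a_{p-n} ... a_p) as a predicate on A^N *)
Definition fol (X : seqN -> Prop) (a : seqZ) (p : Z) (n : nat) (c : seqN) : Prop :=
  X c /\
  exists b : seqZ, nat_ext X b /\
    (forall k : nat, (k <= n)%nat -> b (- Z.of_nat k) = a (p - Z.of_nat k)) /\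
    (forall i : nat, b (Z.of_nat i) = c i).

Definition eventually_Markov_at (X : seqN -> Prop) (a : seqZ) (p : Z) : Prop :=
  exists N : nat, forall n : nat, (N <= n)%nat ->
    forall c : seqN, fol X a p n c <-> fol X a p N c.

Definition eventually_Markov_part (X : seqN -> Prop) (a : seqZ) : Prop :=
  nat_ext X a /\ forall p : Z, eventually_Markov_at X a p.

End Subshift.

(* Suppose a is eventually Markov at time 0 with memory N: every future that may
   follow the block a_{-N..0} may follow the whole past of a.  By minimality
   (and compactness) the block a_{-N..0} occurs again at some time -q < 0, so
   the word W = a_{-q..-1} may be inserted in front of a_0 any number of times.
   The limit of these pumped points is the periodic point W^Z, and a minimal
   system containing a periodic point is that finite orbit. *)

From mathcomp Require Import ssreflect ssrbool fintype.
From mathcomp Require Import eqtype seq.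
From Stdlib Require Import ZArith List Lia Classical FunctionalExtensionality.
From Stdlib Require Import IndefiniteDescription.
Set Implicit Arguments.
Local Open Scope Z_scope.

Definition inf_often (P : nat -> Prop) : Prop :=
  forall M : nat, exists n, (M <= n)%nat /\ P n.

Lemma inf_often_In (T : Type) (l : list T) (P : nat -> T -> Prop) :
  inf_often (fun n => exists t, In t l /\ P n t) ->
  exists t, In t l /\ inf_often (fun n => P n t).
Proof.
  induction l as [|t l IH]; intros Hinf.
  - destruct (Hinf 0%nat) as [n [_ [t [[] _]]]].
  - destruct (classic (inf_often (fun n => P n t))) as [Ht|Ht].
    + exists t; split; [left|]; auto.
    + apply not_all_ex_not in Ht as [M0 HM0].
      destruct IH as [t' [Ht' Hinf']].
      * intros M. destruct (Hinf (Nat.max M M0)) as [n [Hn [t' [[<-|Ht'] Pn]]]].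
        -- exfalso. apply HM0. exists n. split; [lia|exact Pn].
        -- exists n. split; [lia|]. exists t'. auto.
      * exists t'. split; [right|]; auto.
Qed.

Lemma In_enum (T : finType) (t : T) : In t (enum {: T}).
Proof.
  have : t \in enum {: T} by rewrite mem_enum.
  elim: (enum {: T}) => [|x s IH] //=.
  rewrite seq.in_cons => /orP [/eqP ->|H]; [left|right]; auto.
Qed.

Lemma inf_often_fin (T : finType) (P : nat -> T -> Prop) :
  inf_often (fun n => exists t, P n t) -> exists t, inf_often (fun n => P n t).
Proof.
  intros Hinf. destruct (@inf_often_In _ (enum {: T}) P) as [t [_ Ht]].
  - intros M. destruct (Hinf M) as [n [Hn [t Pt]]].
    exists n. split; [exact Hn|]. exists t. split; [apply In_enum|exact Pt].
  - exists t. exact Ht.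
Qed.

Definition agree {A : finType} (m : nat) (u v : seqZ A) : Prop :=
  forall i, Z.abs i < Z.of_nat m -> u i = v i.

Lemma agree_chain_limit (A : finType) (h : nat -> seqZ A) :
  (forall m, agree m (h m) (h (S m))) ->
  forall m, agree m (h m) (fun i => h (S (Z.abs_nat i)) i).
Proof.
  intros Hstep.
  have Hmono : forall j m, (j <= m)%nat -> agree j (h j) (h m).
  { intros j m Hjm. induction Hjm as [|m Hjm IH]; [intros i _; reflexivity|].
    intros i Hi. rewrite (IH i Hi). apply Hstep. lia. }
  intros m i Hi. symmetry. apply (Hmono (S (Z.abs_nat i)) m); lia.
Qed.

Section ClosedSubshift.
Variables (A : finType) (X : seqN A -> Prop).
Hypothesis HX : closedN X.

Lemma nat_ext_shift (z : seqZ A) (k : Z) : nat_ext X z -> nat_ext X (shiftZ_iter k z).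
Proof.
  intros Hz p.
  replace (tail_from (shiftZ_iter k z) p) with (tail_from z (p + k)); [apply Hz|].
  apply functional_extensionality => i. unfold tail_from, shiftZ_iter. f_equal. lia.
Qed.

Lemma nat_ext_closed (y : seqZ A) :
  (forall L : nat, exists z, nat_ext X z /\ agree L z y) -> nat_ext X y.
Proof.
  intros Hy p. apply HX => n.
  destruct (Hy (Z.abs_nat p + n + 1)%nat) as [z [Hz Hzy]].
  exists (tail_from z p). split; [apply Hz|].
  intros i Hi. apply Hzy. lia.
Qed.

Section Compactness.
Variable y : nat -> seqZ A.

Definition cluster_on (m : nat) (u : seqZ A) : Prop :=
  inf_often (fun n => agree m u (y n)).

Lemma cluster_on_extend m u :
  cluster_on m u -> exists v, agree m u v /\ cluster_on (S m) v.
Proof.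
  intros Hu.
  destruct (@inf_often_fin (A * A)%type
    (fun n ab => agree m u (y n) /\ ab = (y n (- Z.of_nat m), y n (Z.of_nat m))))
    as [[al be] Hab].
  { intros M. destruct (Hu M) as [n [Hn Hun]].
    exists n. split; [exact Hn|]. eexists. split; [exact Hun|reflexivity]. }
  exists (fun i => if i =? - Z.of_nat m then al else if i =? Z.of_nat m then be else u i).
  split.
  - intros i Hi. destruct (Z.eqb_spec i (- Z.of_nat m)); [lia|].
    destruct (Z.eqb_spec i (Z.of_nat m)); [lia|reflexivity].
  - intros M. destruct (Hab M) as [n [Hn [Hun Hn_ab]]].
    exists n. split; [exact Hn|]. injection Hn_ab as -> ->.
    intros i Hi. destruct (Z.eqb_spec i (- Z.of_nat m)); [subst; reflexivity|].
    destruct (Z.eqb_spec i (Z.of_nat m)); [subst; reflexivity|].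
    apply Hun. lia.
Qed.

(* König's lemma: extend the window one step at a time, keeping infinitely
   many terms of y in agreement. *)
Lemma exists_cluster_point : exists z, forall m, cluster_on m z.
Proof.
  destruct (functional_choice (fun (mu : nat * seqZ A) v =>
    cluster_on (fst mu) (snd mu) -> agree (fst mu) (snd mu) v /\ cluster_on (S (fst mu)) v))
    as [step Hstep].
  { intros [m u]. destruct (classic (cluster_on m u)) as [Hu|Hu].
    - destruct (cluster_on_extend Hu) as [v Hv]. exists v. auto.
    - exists u. contradiction. }
  pose h := nat_rect (fun _ => seqZ A) (y 0%nat) (fun m u => step (m, u)).
  have Hh : forall m, cluster_on m (h m).
  { induction m as [|m IH].
    - intros M. exists M. split; [lia|]. intros i Hi. lia.
    - exact (proj2 (Hstep (m, h m) IH)). }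
  have Hlim := @agree_chain_limit A h (fun m => proj1 (Hstep (m, h m) (Hh m))).
  exists (fun i => h (S (Z.abs_nat i)) i). intros m M.
  destruct (Hh m M) as [n [Hn Hmn]]. exists n. split; [exact Hn|].
  intros i Hi. rewrite -(Hlim m i Hi). exact (Hmn i Hi).
Qed.

End Compactness.

Lemma nat_ext_cluster_point (y : nat -> seqZ A) :
  (forall n, nat_ext X (y n)) ->
  exists z, nat_ext X z /\ forall m, inf_often (fun n => agree m z (y n)).
Proof.
  intros Hy. destruct (exists_cluster_point y) as [z Hz].
  exists z. split; [|exact Hz].
  apply nat_ext_closed => L. destruct (Hz L 0%nat) as [n [_ Hn]].
  exists (y n). split; [apply Hy|]. intros i Hi. symmetry. apply Hn, Hi.
Qed.

(* Recurrence: apply minimality to a cluster point of the left shifts of a. *)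
Lemma minimal_ext_return_left (a : seqZ A) (N : nat) :
  minimal_ext X -> nat_ext X a ->
  exists q, 0 < q /\ forall t, (t <= N)%nat -> a (- q - Z.of_nat t) = a (- Z.of_nat t).
Proof.
  intros Hmin Ha.
  destruct (@nat_ext_cluster_point (fun n => shiftZ_iter (- Z.of_nat n) a)) as [z [Hz Hcl]].
  { intros n. apply nat_ext_shift, Ha. }
  destruct (Hmin z a Hz Ha N) as [k Hk].
  destruct (Hcl (Z.abs_nat k + N + 1)%nat (Z.abs_nat k + N + 1)%nat) as [n [Hn Hzn]].
  exists (Z.of_nat n - k). split; [lia|]. intros t Ht.
  rewrite -(Hk (- Z.of_nat t)); last lia. unfold shiftZ_iter.
  rewrite (Hzn (- Z.of_nat t + k)); last lia. unfold shiftZ_iter. f_equal. lia.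
Qed.

Lemma minimal_ext_periodic_finite (R : seqZ A) (q : Z) :
  minimal_ext X -> 0 < q -> (forall i, R (i mod q) = R i) -> nat_ext X R ->
  ~ infinite_ext X.
Proof.
  intros Hmin Hq Hper HR Hinf. apply Hinf.
  exists (map (fun j => shiftZ_iter (Z.of_nat j) R) (List.seq 0 (Z.to_nat q))).
  intros x Hx.
  destruct (@inf_often_In _ (List.seq 0 (Z.to_nat q))
    (fun m j => agree m (shiftZ_iter (Z.of_nat j) R) x)) as [j [Hj Hjx]].
  { intros M. exists M. split; [lia|].
    destruct (Hmin R x HR Hx M) as [k Hk].
    have Hkq := Z.mod_pos_bound k q Hq.
    exists (Z.to_nat (k mod q)). split; [apply in_seq; lia|].
    intros i Hi. rewrite -(Hk i); last lia. unfold shiftZ_iter.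
    rewrite Z2Nat.id; last lia.
    rewrite -Hper Z.add_mod_idemp_r; last lia. apply Hper. }
  apply in_map_iff. exists j. split; [|exact Hj].
  apply functional_extensionality => i.
  destruct (Hjx (S (Z.abs_nat i))) as [n [Hn Hagree]]. apply Hagree. lia.
Qed.

Section MarkovPumping.
Variables (a : seqZ A) (N : nat) (q : Z).
Hypothesis Ha : nat_ext X a.
Hypothesis HMarkov : forall n, (N <= n)%nat -> forall c, fol X a 0 n c <-> fol X a 0 N c.
Hypothesis Hq : 0 < q.
Hypothesis Hreturn : forall t, (t <= N)%nat -> a (- q - Z.of_nat t) = a (- Z.of_nat t).

(* The past a_{<0} followed by c; note that c_0 sits at time 0, in the place of a_0. *)
Definition glue (c : seqN A) : seqZ A := fun i => if i <? 0 then a i else c (Z.to_nat i).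

Lemma glue_nat_ext c : fol X a 0 N c -> nat_ext X (glue c).
Proof.
  intros Hc p.
  destruct (proj2 (HMarkov (Nat.le_max_l N (Z.to_nat (- p))) c) Hc)
    as [_ [b [Hb [Hba Hbc]]]].
  replace (tail_from (glue c) p) with (tail_from b p); [apply Hb|].
  apply functional_extensionality => i. unfold tail_from, glue.
  destruct (Z.ltb_spec (p + Z.of_nat i) 0).
  - replace (p + Z.of_nat i) with (- Z.of_nat (Z.to_nat (- (p + Z.of_nat i)))) by lia.
    rewrite Hba; last lia. reflexivity.
  - rewrite -Hbc. f_equal. lia.
Qed.

Definition loop : seqZ A := fun i => a (i mod q - q).

Lemma loop_periodic i : loop (i mod q) = loop i.
Proof. unfold loop. rewrite Z.mod_mod; [reflexivity|lia]. Qed.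

Lemma loop_add_mul i (k : Z) : loop (i + k * q) = loop i.
Proof. rewrite -loop_periodic Z.mod_add; last lia. apply loop_periodic. Qed.

(* a with the word a_{-q} ... a_{-1} inserted k times before a_0. *)
Definition pumped (k : nat) : seqZ A := fun i =>
  if i <? 0 then a i else if i <? Z.of_nat k * q then loop i else a (i - Z.of_nat k * q).

Lemma pumped_tail_fol k : nat_ext X (pumped k) -> fol X a 0 N (tail_from (pumped k) (- q)).
Proof.
  intros Hk. split; [apply Hk|].
  exists (shiftZ_iter (- q) (pumped k)). split; [apply nat_ext_shift, Hk|]. split.
  - intros t Ht. unfold shiftZ_iter, pumped.
    destruct (Z.ltb_spec (- Z.of_nat t + - q) 0); [|lia].
    rewrite -(Hreturn Ht). f_equal. lia.
  - intros i. unfold shiftZ_iter, tail_from. f_equal. lia.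
Qed.

Lemma pumped_succ k : pumped (S k) = glue (tail_from (pumped k) (- q)).
Proof.
  apply functional_extensionality => i. unfold glue, tail_from, pumped.
  destruct (Z.ltb_spec i 0); [reflexivity|].
  rewrite Z2Nat.id; last lia.
  have Hkq : 0 <= Z.of_nat k * q by nia.
  have HSkq : Z.of_nat (S k) * q = Z.of_nat k * q + q by lia.
  rewrite HSkq.
  destruct (Z.ltb_spec (- q + i) 0).
  - destruct (Z.ltb_spec i (Z.of_nat k * q + q)); [|lia].
    unfold loop. rewrite Z.mod_small; last lia. f_equal. lia.
  - destruct (Z.ltb_spec (- q + i) (Z.of_nat k * q));
      destruct (Z.ltb_spec i (Z.of_nat k * q + q)); try lia.
    + replace (- q + i) with (i + -1 * q) by lia. symmetry. apply loop_add_mul.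
    + f_equal. lia.
Qed.

Lemma pumped_nat_ext k : nat_ext X (pumped k).
Proof.
  induction k as [|k IH].
  - replace (pumped 0) with a; [exact Ha|].
    apply functional_extensionality => i. unfold pumped.
    destruct (Z.ltb_spec i 0); [reflexivity|].
    destruct (Z.ltb_spec i (Z.of_nat 0 * q)); [lia|]. f_equal. lia.
  - rewrite pumped_succ. apply glue_nat_ext, pumped_tail_fol, IH.
Qed.

Lemma loop_nat_ext : nat_ext X loop.
Proof.
  apply nat_ext_closed => L.
  exists (shiftZ_iter (Z.of_nat (S L) * q) (pumped (2 * S L))).
  split; [apply nat_ext_shift, pumped_nat_ext|].
  intros i Hi. unfold shiftZ_iter, pumped.
  destruct (Z.ltb_spec (i + Z.of_nat (S L) * q) 0); [nia|].
  destruct (Z.ltb_spec (i + Z.of_nat (S L) * q) (Z.of_nat (2 * S L) * q)); [|nia].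
  apply loop_add_mul.
Qed.

End MarkovPumping.

End ClosedSubshift.

Theorem proposition5p13 (A : finType) (X : seqN A -> Prop) :
  one_sided_subshift X ->
  infinite_ext X ->
  minimal_ext X ->
  forall a : seqZ A, ~ eventually_Markov_part X a.
Proof.
  intros [_ [HX _]] Hinf Hmin a [Ha HMarkov].
  destruct (HMarkov 0) as [N HN].
  destruct (minimal_ext_return_left HX N Hmin Ha) as [q [Hq Hreturn]].
  have Hloop := loop_nat_ext HX Ha HN Hq Hreturn.
  exact (minimal_ext_periodic_finite Hmin Hq (loop_periodic a Hq) Hloop Hinf).
Qed.
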